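(* Let $D$ be an oriented link (or tangle) diagram with a shaping $\{\chi_i=(a_i,b_i,m_i)\}$, and let $c$ be a crossing of $D$, with segments labeled $1,2,1',2'$ as described in the context. If one of the relations \[ b_{2'}=b_1,\qquad b_2=m_1b_1,\qquad m_2b_2=m_1b_{1'},\qquad m_2b_{2'}=b_{1'} \] holds, then all four of them hold. In this case (the crossing is called pinched) the four quantities $b_{2'}/b_1$, $m_1b_1/b_2$, $m_2b_2/(m_1b_{1'})$, $b_{1'}/(m_2b_{2'})$ all equal $1$.
   Context: A shape is a triple $\chi=(a,b,m)$ of nonzero complex numbers. The segments of an oriented diagram are the edges of its underlying $4$-valent planar graph. At a crossing, rotate the picture so that both strands point to the right; label the incoming upper-left segment $1$, the incoming lower-left segment $2$, the outgoing lower-right segment $1'$ (the continuation of segment $1$), and the outgoing upper-right segment $2'$ (the continuation of segment $2$). Each crossing has a sign $\epsilon=\pm1$. A shaping assigns a shape $\chi_i=(a_i,b_i,m_i)$ to each segment so that at every crossing $m_{1'}=m_1$, $m_{2'}=m_2$, all components of $\chi_{1'},\chi_{2'}$ are finite and nonzero, and: at a positive crossing \[ A=1-\frac{m_1b_1}{b_2}\Big(1-\frac{a_1}{m_1}\Big)\Big(1-\frac{1}{m_2a_2}\Big),\quad a_{1'}=a_1A^{-1},\quad a_{2'}=a_2A, \] \[ b_{1'}=\frac{m_2b_2}{m_1}\Big(1-m_2a_2\big(1-\tfrac{b_2}{m_1b_1}\big)\Big)^{-1},\qquad b_{2'}=b_1\Big(1-\frac{m_1}{a_1}\big(1-\tfrac{b_2}{m_1b_1}\big)\Big);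 \] and at a negative crossing \[ \tilde A=1-\frac{b_2}{m_1b_1}(1-m_1a_1)\Big(1-\frac{m_2}{a_2}\Big),\quad a_{1'}=a_1\tilde A^{-1},\quad a_{2'}=a_2\tilde A, \] \[ b_{1'}=\frac{m_2b_2}{m_1}\Big(1-\frac{a_2}{m_2}\big(1-\tfrac{m_1b_1}{b_2}\big)\Big),\qquad b_{2'}=b_1\Big(1-\frac{1}{m_1a_1}\big(1-\tfrac{m_1b_1}{b_2}\big)\Big)^{-1}. \] *)

From HB Require Import structures.
From mathcomp Require Import all_boot all_order all_algebra.
From mathcomp Require Import complex.
From mathcomp Require Import reals.
Set Implicit Arguments. Unset Strict Implicit. Unset Printing Implicit Defensive.
Import Order.TTheory GRing.Theory Num.Theory.
Local Open Scope ring_scope.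

Record cshape (F : Type) := Shape { sa : F; sb : F; sm : F }.

Definition shape_nz (F : fieldType) (chi : cshape F) : Prop :=
  sa chi != 0 /\ sb chi != 0 /\ sm chi != 0.

Inductive crossing_sign := Positive | Negative.

(* The shaping relations at a crossing with incoming segments 1, 2 and
   outgoing segments 1' (continuation of 1), 2' (continuation of 2).
   Finiteness/nonzeroness of chi1', chi2' is imposed separately by shape_nz;
   note x^-1 = 0 for x = 0 in MathComp, so a pole would force a zero value
   and is thereby excluded by shape_nz. *)
Definition crossing_rel (F : fieldType) (eps : crossing_sign)
  (c1 c2 c1' c2' : cshape F) : Prop :=
  let a1 := sa c1 in let b1 := sb c1 in let m1 := sm c1 in
  let a2 := sa c2 in let b2 := sb c2 in let m2 := sm c2 in
  sm c1' = m1 /\ sm c2' = m2 /\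
  match eps with
  | Positive =>
      let A := 1 - m1 * b1 / b2 * (1 - a1 / m1) * (1 - 1 / (m2 * a2)) in
      sa c1' = a1 * A^-1 /\ sa c2' = a2 * A /\
      sb c1' = m2 * b2 / m1 * (1 - m2 * a2 * (1 - b2 / (m1 * b1)))^-1 /\
      sb c2' = b1 * (1 - m1 / a1 * (1 - b2 / (m1 * b1)))
  | Negative =>
      let A := 1 - b2 / (m1 * b1) * (1 - m1 * a1) * (1 - m2 / a2) in
      sa c1' = a1 * A^-1 /\ sa c2' = a2 * A /\
      sb c1' = m2 * b2 / m1 * (1 - a2 / m2 * (1 - m1 * b1 / b2)) /\
      sb c2' = b1 * (1 - 1 / (m1 * a1) * (1 - m1 * b1 / b2))^-1
  end.

Definition shaped_crossing (F : fieldType) (eps : crossing_sign)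
  (c1 c2 c1' c2' : cshape F) : Prop :=
  [/\ shape_nz c1, shape_nz c2, shape_nz c1', shape_nz c2'
    & crossing_rel eps c1 c2 c1' c2'].

From mathcomp Require Import all_boot all_order all_algebra.
From mathcomp Require Import complex.
From mathcomp Require Import reals.
From mathcomp Require Import ring.
Set Implicit Arguments. Unset Strict Implicit. Unset Printing Implicit Defensive.
Import GRing.Theory.
Local Open Scope ring_scope.

(* Put f_w(x) := 1 - w (1 - x).  At a positive crossing, with x := b2 / (m1 b1),
   u := m1 / a1 and v := m2 a2, the four ratios b2'/b1, m1 b1/b2,
   m2 b2/(m1 b1'), b1'/(m2 b2') are f_u(x), 1/x, f_v(x) and the inverse of
   their product.  At a negative crossing, with x := m1 b1 / b2, u := 1/(m1 a1)
   and v := a2/m2, they are the inverses of these.  Each of f_u(x), 1/x, f_v(x)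
   is 1 iff x = 1.  If the fourth ratio is 1 then f_u(x) f_v(x) = x, i.e.
   (1 - x)(1 - u - v + u v (1 - x)) = 0; the second factor vanishing would make
   (1 - 1/u)(1 - 1/v) = x, i.e. kill the factor A with a2' = a2 A, which is
   excluded since a2' != 0.  So x = 1 in every case, and then all ratios are 1. *)

Definition pinch_factor (F : fieldType) (w x : F) : F := 1 - w * (1 - x).

Lemma pinch_factor1 (F : fieldType) (w : F) : pinch_factor w 1 = 1.
Proof. by rewrite /pinch_factor subrr mulr0 subr0. Qed.

Lemma pinch_factor_eq1 (F : fieldType) (w x : F) :
  w != 0 -> pinch_factor w x = 1 -> x = 1.
Proof.
move=> w0 /eqP; rewrite /pinch_factor subr_eq addrC -subr_eq subrr eq_sym.
by rewrite mulf_eq0 (negbTE w0) subr_eq0 => /eqP/esym.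
Qed.

Lemma pinch_factor_mul_eq (F : fieldType) (x u v : F) :
  x != 0 -> u != 0 -> v != 0 -> 1 - x^-1 * (1 - u^-1) * (1 - v^-1) != 0 ->
  pinch_factor u x * pinch_factor v x = x -> x = 1.
Proof.
move=> x0 u0 v0 A0 fuv.
have : (1 - x) * (1 - u - v + u * v * (1 - x))
         = pinch_factor u x * pinch_factor v x - x by rewrite /pinch_factor; ring.
rewrite fuv subrr => /eqP; rewrite mulf_eq0 subr_eq0 => /orP[/eqP/esym // | /eqP deg].
case/negP: A0; apply/eqP; rewrite -mulrA.
have -> : (1 - u^-1) * (1 - v^-1) = x + (1 - u - v + u * v * (1 - x)) / (u * v).
  by field; rewrite u0 v0.
by rewrite deg mul0r addr0 mulVf // subrr.
Qed.

Lemma pinch_ratios_eq1 (F : fieldType) (x u v r1 r2 r3 r4 : F) :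
  x != 0 -> u != 0 -> v != 0 -> 1 - x^-1 * (1 - u^-1) * (1 - v^-1) != 0 ->
  r1 = pinch_factor u x -> r2 = x^-1 -> r3 = pinch_factor v x ->
  r1 * r2 * r3 * r4 = 1 ->
  r1 = 1 \/ r2 = 1 \/ r3 = 1 \/ r4 = 1 -> r1 = 1 /\ r2 = 1 /\ r3 = 1 /\ r4 = 1.
Proof.
move=> x0 u0 v0 A0 -> -> -> prod1 some1.
suff x1 : x = 1 by move: prod1; rewrite x1 !pinch_factor1 invr1 !mul1r.
case: some1 => [/(pinch_factor_eq1 u0) | [/eqP | [/(pinch_factor_eq1 v0) | r41]]].
- by [].
- by rewrite invr_eq1 => /eqP.
- by [].
apply: (pinch_factor_mul_eq x0 u0 v0 A0); apply: divr1_eq.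
by rewrite r41 mulr1 mulrAC in prod1.
Qed.

Lemma inv_pinch_ratios_eq1 (F : fieldType) (x u v r1 r2 r3 r4 : F) :
  x != 0 -> u != 0 -> v != 0 -> 1 - x^-1 * (1 - u^-1) * (1 - v^-1) != 0 ->
  r1 = (pinch_factor u x)^-1 -> r2 = x -> r3 = (pinch_factor v x)^-1 ->
  r1 * r2 * r3 * r4 = 1 ->
  r1 = 1 \/ r2 = 1 \/ r3 = 1 \/ r4 = 1 -> r1 = 1 /\ r2 = 1 /\ r3 = 1 /\ r4 = 1.
Proof.
move=> x0 u0 v0 A0 e1 e2 e3 prod1 some1.
have inv_eq1 (r : F) : r^-1 = 1 -> r = 1 by move/eqP; rewrite invr_eq1 => /eqP.
have eq1_inv (r : F) : r = 1 -> r^-1 = 1 by move->; rewrite invr1.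
have [/inv_eq1 -> [/inv_eq1 -> [/inv_eq1 -> /inv_eq1 ->]]] //:
    r1^-1 = 1 /\ r2^-1 = 1 /\ r3^-1 = 1 /\ r4^-1 = 1.
  apply: (pinch_ratios_eq1 x0 u0 v0 A0).
  - by rewrite e1 invrK.
  - by rewrite e2.
  - by rewrite e3 invrK.
  - by rewrite -!invfM prod1 invr1.
  - by case: some1 => [/eq1_inv | [/eq1_inv | [/eq1_inv | /eq1_inv]]]; tauto.
Qed.

Section ShapedCrossing.

Variables (F : fieldType) (c1 c2 c1' c2' : cshape F).
Hypotheses (nz1 : shape_nz c1) (nz2 : shape_nz c2).
Hypotheses (nz1' : shape_nz c1') (nz2' : shape_nz c2').

Local Notation a1 := (sa c1).
Local Notation b1 := (sb c1).
Local Notation m1 := (sm c1).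
Local Notation a2 := (sa c2).
Local Notation b2 := (sb c2).
Local Notation m2 := (sm c2).
Local Notation a2' := (sa c2').
Local Notation b1' := (sb c1').
Local Notation b2' := (sb c2').

Let a1_neq0 : a1 != 0. Proof. by case: nz1. Qed.
Let b1_neq0 : b1 != 0. Proof. by case: nz1 => _ []. Qed.
Let m1_neq0 : m1 != 0. Proof. by case: nz1 => _ []. Qed.
Let a2_neq0 : a2 != 0. Proof. by case: nz2. Qed.
Let b2_neq0 : b2 != 0. Proof. by case: nz2 => _ []. Qed.
Let m2_neq0 : m2 != 0. Proof. by case: nz2 => _ []. Qed.
Let a2'_neq0 : a2' != 0. Proof. by case: nz2'. Qed.
Let b1'_neq0 : b1' != 0. Proof. by case: nz1' => _ []. Qed.
Let b2'_neq0 : b2' != 0. Proof. by case: nz2' => _ []. Qed.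

Local Notation r1 := (b2' / b1).
Local Notation r2 := (m1 * b1 / b2).
Local Notation r3 := (m2 * b2 / (m1 * b1')).
Local Notation r4 := (b1' / (m2 * b2')).

Lemma pinch_eq_ratio1 :
  b2' = b1 \/ b2 = m1 * b1 \/ m2 * b2 = m1 * b1' \/ m2 * b2' = b1' ->
  r1 = 1 \/ r2 = 1 \/ r3 = 1 \/ r4 = 1.
Proof.
case=> [-> | [-> | [-> | <-]]]; [left | right; left | do 2 right; left | do 3 right].
- exact: divff.
- by rewrite divff // mulf_neq0.
- by rewrite divff // mulf_neq0.
- by rewrite divff // mulf_neq0.
Qed.

Lemma ratios_eq1_pinch_eqs : r1 = 1 /\ r2 = 1 /\ r3 = 1 /\ r4 = 1 ->
  b2' = b1 /\ b2 = m1 * b1 /\ m2 * b2 = m1 * b1' /\ m2 * b2' = b1'.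
Proof. by case=> [/divr1_eq -> [/divr1_eq <- [/divr1_eq -> /divr1_eq <-]]]. Qed.

Lemma pinch_ratios_mul : r1 * r2 * r3 * r4 = 1.
Proof. by field; rewrite b1_neq0 m1_neq0 b2_neq0 m2_neq0 b1'_neq0 b2'_neq0. Qed.

Lemma ratio1_scaled (q : F) : b2' = b1 * q -> r1 = q.
Proof. by move->; rewrite mulrC mulKf. Qed.

Lemma ratio3_scaled (q : F) : b1' = m2 * b2 / m1 * q -> r3 = q^-1.
Proof.
move->; rewrite mulrA [m1 * _]mulrCA divff // mulr1 invfM mulVKf //.
by rewrite mulf_neq0.
Qed.

Lemma positive_pinch_ratios_eq1 : crossing_rel Positive c1 c2 c1' c2' ->
  r1 = 1 \/ r2 = 1 \/ r3 = 1 \/ r4 = 1 -> r1 = 1 /\ r2 = 1 /\ r3 = 1 /\ r4 = 1.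
Proof.
rewrite /crossing_rel /= => -[_ [_ [_ [a2'E [b1'E b2'E]]]]].
set x := b2 / (m1 * b1) in b1'E b2'E.
apply: (@pinch_ratios_eq1 _ x (m1 / a1) (m2 * a2)).
- by rewrite /x mulf_neq0 // invr_eq0 mulf_neq0.
- by rewrite mulf_neq0 ?invr_eq0.
- by rewrite mulf_neq0.
- by move: a2'_neq0; rewrite a2'E /x !invf_div div1r mulf_eq0 negb_or => /andP[].
- exact: ratio1_scaled.
- by rewrite /x invf_div.
- by rewrite (ratio3_scaled b1'E) invrK.
- exact: pinch_ratios_mul.
Qed.

Lemma negative_pinch_ratios_eq1 : crossing_rel Negative c1 c2 c1' c2' ->
  r1 = 1 \/ r2 = 1 \/ r3 = 1 \/ r4 = 1 -> r1 = 1 /\ r2 = 1 /\ r3 = 1 /\ r4 = 1.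
Proof.
rewrite /crossing_rel /= => -[_ [_ [_ [a2'E [b1'E b2'E]]]]].
set x := m1 * b1 / b2 in b1'E b2'E.
apply: (@inv_pinch_ratios_eq1 _ x (1 / (m1 * a1)) (a2 / m2)).
- by rewrite /x mulf_neq0 ?mulf_neq0 ?invr_eq0.
- by rewrite div1r invr_eq0 mulf_neq0.
- by rewrite mulf_neq0 ?invr_eq0.
- by move: a2'_neq0; rewrite a2'E /x div1r invrK !invf_div mulf_eq0 negb_or => /andP[].
- exact: ratio1_scaled.
- by [].
- exact: ratio3_scaled.
- exact: pinch_ratios_mul.
Qed.

End ShapedCrossing.

Theorem proposition2p15 (R : realType) (eps : crossing_sign)
  (c1 c2 c1' c2' : cshape (complex R)) :
  shaped_crossing eps c1 c2 c1' c2' ->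
  let b1 := sb c1 in let m1 := sm c1 in let b2 := sb c2 in let m2 := sm c2 in
  let b1' := sb c1' in let b2' := sb c2' in
  (b2' = b1 \/ b2 = m1 * b1 \/ m2 * b2 = m1 * b1' \/ m2 * b2' = b1') ->
  (b2' = b1 /\ b2 = m1 * b1 /\ m2 * b2 = m1 * b1' /\ m2 * b2' = b1') /\
  (b2' / b1 = 1 /\ m1 * b1 / b2 = 1 /\ m2 * b2 / (m1 * b1') = 1 /\
   b1' / (m2 * b2') = 1).
Proof.
move=> [nz1 nz2 nz1' nz2' rel] b1 m1 b2 m2 b1' b2' some_eq.
have some_ratio1 := pinch_eq_ratio1 nz1 nz2 nz1' nz2' some_eq.
have all_ratio1 : b2' / b1 = 1 /\ m1 * b1 / b2 = 1 /\
    m2 * b2 / (m1 * b1') = 1 /\ b1' / (m2 * b2') = 1.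
  case: eps rel => rel.
  - exact: positive_pinch_ratios_eq1.
  - exact: negative_pinch_ratios_eq1.
by split; first exact: ratios_eq1_pinch_eqs.
Qed.
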